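(* For any prime $p$ and positive integer $n$, \[ \frac{\mathfrak{C}_2(\mathbb{Z}/p^n \mathbb{Z}) }{p^{6n}}= \left(1+\frac{1}{p}\right)\left(1-\frac{1}{p^2}\right)^{-1}\left(1-\frac{1}{p^3}\right)\left(1-\frac{1}{p^{2\lceil n/2\rceil}}\right) + O(n^2p^{-n/2}), \] with an absolute implied constant. In particular, the limit \[ \sigma_p = \lim_{n\to\infty} \frac{\mathfrak{C}_2(\mathbb{Z}/p^n \mathbb{Z}) }{p^{6n}} = \left(1+\frac{1}{p}\right)\left(1-\frac{1}{p^2}\right)^{-1}\left(1-\frac{1}{p^3}\right) \] exists.
   Context: For a prime $p$ and positive integer $n$, $\mathrm{Mat}_2(\mathbb{Z}/p^n\mathbb{Z})$ is the set of $2\times 2$ matrices with entries in $\mathbb{Z}/p^n\mathbb{Z}$, and $\mathfrak{C}_2(\mathbb{Z}/p^n \mathbb{Z})$ is the number of pairs $(A,B)\in \mathrm{Mat}_2(\mathbb{Z}/p^n\mathbb{Z})^2$ with $AB=BA$. *)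

From HB Require Import structures.
From mathcomp Require Import all_boot all_order all_algebra.
From mathcomp Require Import all_classical all_reals all_analysis.
Set Implicit Arguments. Unset Strict Implicit. Unset Printing Implicit Defensive.
Import Order.TTheory GRing.Theory Num.Theory.
Local Open Scope ring_scope.

(* C2 p n = number of pairs (A,B) of 2x2 matrices over Z/p^nZ with AB = BA.
   For p prime and n >= 1 we have p^n >= 2, so 'Z_(p^n) is exactly Z/p^nZ. *)
Definition C2 (p n : nat) : nat :=
  #|[set AB : 'M['Z_(p ^ n)]_2 * 'M['Z_(p ^ n)]_2 | AB.1 *m AB.2 == AB.2 *m AB.1]|.


Definition sigma_p (R : realType) (p : nat) : R :=
  (1 + (p%:R)^-1) * (1 - (p%:R ^+ 2)^-1)^-1 * (1 - (p%:R ^+ 3)^-1).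

Definition main_term (R : realType) (p n : nat) : R :=
  sigma_p R p * (1 - (p%:R ^+ (2 * uphalf n))^-1).

Definition C2_ratio (R : realType) (p n : nat) : R :=
  (C2 p n)%:R / (p%:R ^+ (6 * n)).

From HB Require Import structures.
From mathcomp Require Import all_boot all_order all_algebra.
From mathcomp Require Import all_classical all_reals all_analysis.
From mathcomp Require Import zify ring lra.
Import Order.TTheory GRing.Theory Num.Theory.
Import numFieldNormedType.Exports.
Set Implicit Arguments. Unset Strict Implicit. Unset Printing Implicit Defensive.

(* Write A = d + [[e, b], [c, 0]] and B = w + [[u, y], [z, 0]] with scalars d, w. Then
   AB = BA iff the cross product v × v' of v = (e, b, c) and v' = (u, y, z) vanishes, so
   C2 p n = M^2 times the number of pairs (v, v') in (Z/M)^3 with v × v' = 0, M = p^n.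
   If a coordinate of v is a unit, the solutions v' are the M multiples of v; if v = p v0,
   they are p^3 times the solutions of v0 × v' = 0 modulo p^(n-1). The resulting recursion
   gives the exact count C2 p n = p^(6n) (1 + 1/p + 1/p^2) - p^(5n) (1/p + 1/p^2), so the
   normalised count differs from sigma_p, and from the main term, by O(p^-n). *)

Lemma sum_ord_mul a b (F : nat -> nat) :
  \sum_(i < a * b) F i = \sum_(j < a) \sum_(r < b) F (j * b + r).
Proof.
elim: a => [|a IHa]; first by rewrite mul0n !big_ord0.
by rewrite big_ord_recr /= -IHa mulSn addnC big_split_ord.
Qed.

Lemma sum_ord_periodic N k (F : nat -> nat) : (forall u, F (u %% N) = F u) ->
  \sum_(u < k * N) F u = k * \sum_(u < N) F u.
Proof.
move=> FN; rewrite sum_ord_mul -[k in RHS]card_ord -sum_nat_const.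
apply: eq_bigr => j _; apply: eq_bigr => r _.
by rewrite -FN modnMDl modn_small.
Qed.

Lemma sum_ord_dvdn N p (F : nat -> nat) : 0 < p ->
  \sum_(i < N * p) (p %| i) * F i = \sum_(j < N) F (j * p).
Proof.
move=> p_gt0; rewrite (sum_ord_mul _ _ (fun i => (p %| i) * F i)); apply: eq_bigr => j _.
rewrite -(prednK p_gt0) big_ord_recl addn0 dvdn_mull // mul1n big1 ?addn0 // => r _.
rewrite dvdn_addr ?dvdn_mull // gtnNdvd // -[p in _ < p](prednK p_gt0) ltnS.
Qed.

Definition sum3 M (F : nat -> nat -> nat -> nat) :=
  \sum_(e < M) \sum_(b < M) \sum_(c < M) F e b c.

Lemma eq_sum3 M F1 F2 :
  (forall e b c, e < M -> b < M -> c < M -> F1 e b c = F2 e b c) ->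
  sum3 M F1 = sum3 M F2.
Proof. by move=> eqF; do 3!apply: eq_bigr => ? _; apply: eqF. Qed.

Lemma sum3D M F1 F2 :
  sum3 M (fun e b c => F1 e b c + F2 e b c) = sum3 M F1 + sum3 M F2.
Proof. by rewrite /sum3 -big_split; do 2!(apply: eq_bigr => ? _; rewrite -big_split). Qed.

Lemma sum3Ml M k F : sum3 M (fun e b c => k * F e b c) = k * sum3 M F.
Proof. by rewrite /sum3 big_distrr; do 2!(apply: eq_bigr => ? _; rewrite big_distrr). Qed.

Lemma sum3_const M k : sum3 M (fun _ _ _ => k) = M ^ 3 * k.
Proof. by rewrite /sum3 !sum_nat_const !card_ord; lia. Qed.

Lemma sum3_dvdn N p F : 0 < p ->
  sum3 (N * p) (fun e b c => (p %| e) * ((p %| b) * ((p %| c) * F e b c))) =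
  sum3 N (fun e b c => F (e * p) (b * p) (c * p)).
Proof.
move=> p_gt0; rewrite /sum3.
transitivity (\sum_(e < N * p) (p %| e) *
  \sum_(b < N * p) (p %| b) * \sum_(c < N * p) (p %| c) * F e b c).
  by apply: eq_bigr => e _; rewrite big_distrr; apply: eq_bigr => b _; rewrite !big_distrr.
rewrite (@sum_ord_dvdn N p (fun e =>
  \sum_(b < N * p) (p %| b) * \sum_(c < N * p) (p %| c) * F e b c)) //.
apply: eq_bigr => e _.
rewrite (@sum_ord_dvdn N p (fun b => \sum_(c < N * p) (p %| c) * F (e * p) b c)) //.
by apply: eq_bigr => b _; rewrite (@sum_ord_dvdn N p (F (e * p) (b * p))).
Qed.

Lemma sum3_periodic N k F :
  (forall u y z, F (u %% N) (y %% N) (z %% N) = F u y z) ->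
  sum3 (k * N) F = k ^ 3 * sum3 N F.
Proof.
move=> FN; have modF u y z : F (u %% N) y z = F u y z.
  by rewrite -[LHS]FN modn_mod FN.
have modFy u y z : F u (y %% N) z = F u y z by rewrite -[LHS]FN modn_mod FN.
have modFz u y z : F u y (z %% N) = F u y z by rewrite -[LHS]FN modn_mod FN.
rewrite /sum3 (@sum_ord_periodic N k (fun u => \sum_(y < k * N) \sum_(z < k * N) F u y z));
  last by move=> u; apply: eq_bigr => y _; apply: eq_bigr => z _; rewrite modF.
rewrite expnS -mulnA; congr (_ * _); rewrite big_distrr /=; apply: eq_bigr => u _.
rewrite (@sum_ord_periodic N k (fun y => \sum_(z < k * N) F u y z));
  last by move=> y; apply: eq_bigr => z _; rewrite modFy.
rewrite expnS expn1 -mulnA; congr (_ * _); rewrite big_distrr /=; apply: eq_bigr => y _.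
by rewrite sum_ord_periodic.
Qed.

Lemma eqn_mod_pmul2l p m n d : 0 < p ->
  (p * m == p * n %[mod p * d]) = (m == n %[mod d]).
Proof. by move=> p_gt0; rewrite -!muln_modr eqn_pmul2l. Qed.

Lemma eqn_modZp M m n : 1 < M -> (m == n %[mod M]) = (m%:R == n%:R :> 'Z_M)%R.
Proof.
move=> M_gt1; apply/eqP/eqP => [mn | /(congr1 val)].
  by apply: val_inj; rewrite /= !val_Zp_nat.
by rewrite /= !val_Zp_nat.
Qed.

Lemma sum_ord_eqZp M (a : 'Z_M) : 1 < M -> \sum_(y < M) (y%:R == a :> 'Z_M)%R = 1.
Proof.
move=> M_gt1; have aM : val a < M by rewrite -[M in _ < M](Zp_cast M_gt1) ltn_ord.
rewrite (bigD1 (Ordinal aM)) //= natr_Zp eqxx big1 ?addn0 // => y neq_ya.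
apply/eqP; rewrite eqb0; apply: contra neq_ya => /eqP ya; apply/eqP/val_inj.
by rewrite /= -ya val_Zp_nat // modn_small.
Qed.

Definition cross_mod0 M e b c u y z : bool :=
  [&& b * z == c * y %[mod M], c * u == e * z %[mod M] & e * y == b * u %[mod M]].

Definition cross_ker M e b c := sum3 M (cross_mod0 M e b c).

Definition cross_pairs M := sum3 M (cross_ker M).

Lemma cross_ker_rot M e b c : cross_ker M e b c = cross_ker M b c e.
Proof.
rewrite /cross_ker /sum3 exchange_big /=; apply: eq_bigr => y _.
rewrite exchange_big /=; apply: eq_bigr => z _; apply: eq_bigr => u _.
by rewrite /cross_mod0 andbC -andbA.
Qed.

Lemma cross_ker_unit M e b c : 1 < M -> coprime M e -> cross_ker M e b c = M.
Proof.
move=> M_gt1 coMe; pose E : 'Z_M := e%:R%R.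
have unitE : E \is a GRing.unit by rewrite unitZpE.
have solE u y z : cross_mod0 M e b c u y z =
    (y%:R == E^-1 * b%:R * u%:R :> 'Z_M)%R && (z%:R == E^-1 * c%:R * u%:R :> 'Z_M)%R.
  rewrite /cross_mod0 !eqn_modZp // !natrM -/E.
  move: (b%:R)%R (c%:R)%R (u%:R)%R (y%:R)%R (z%:R)%R => B C U Y Z.
  apply/and3P/andP => [[_ /eqP CUEZ /eqP EYBU] | [/eqP-> /eqP->]].
    by split; apply/eqP; rewrite -mulrA; [rewrite -EYBU | rewrite CUEZ]; rewrite mulKr.
  by split; apply/eqP; rewrite ?mulrA ?mulrV ?mul1r //; ring.
rewrite /cross_ker /sum3 -[RHS]muln1 -[M in M * 1]card_ord -sum_nat_const.
apply: eq_bigr => u _.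
rewrite -(sum_ord_eqZp (E^-1 * b%:R * u%:R)%R M_gt1); apply: eq_bigr => y _.
rewrite -[RHS]muln1 -(sum_ord_eqZp (E^-1 * c%:R * u%:R)%R M_gt1) big_distrr.
by apply: eq_bigr => z _; rewrite solE; case: (_ == _); case: (_ == _).
Qed.

Lemma cross_ker_coprime M e b c : 1 < M ->
  [|| coprime M e, coprime M b | coprime M c] -> cross_ker M e b c = M.
Proof.
move=> M_gt1 /or3P[] coM; first exact: cross_ker_unit.
  by rewrite cross_ker_rot cross_ker_unit.
by rewrite -cross_ker_rot cross_ker_unit.
Qed.

Lemma cross_ker_scale p N e b c : 0 < p ->
  cross_ker (p * N) (e * p) (b * p) (c * p) = p ^ 3 * cross_ker N e b c.
Proof.
move=> p_gt0; rewrite /cross_ker -sum3_periodic => [|u y z]; last first.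
  by rewrite /cross_mod0 !modnMmr.
apply: eq_sum3 => u y z _ _ _.
have mulpE x w : x * p * w = p * (x * w) by rewrite mulnAC mulnC.
by rewrite /cross_mod0 !mulpE !eqn_mod_pmul2l.
Qed.

Lemma cross_ker_rec p n e b c : prime p ->
  cross_ker (p ^ n.+1) e b c =
  if [&& p %| e, p %| b & p %| c]
  then p ^ 3 * cross_ker (p ^ n) (e %/ p) (b %/ p) (c %/ p) else p ^ n.+1.
Proof.
move=> p_pr; have p_gt0 := prime_gt0 p_pr.
case: ifP => [/and3P[/divnK {1}<- /divnK {1}<- /divnK {1}<-] | ndvd].
  by rewrite expnS cross_ker_scale.
apply: cross_ker_coprime; first by rewrite (ltn_exp2l 0) ?prime_gt1.
by rewrite !coprime_pexpl // !prime_coprime // -!negb_and ndvd.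
Qed.

Lemma cross_pairs_rec p n : prime p ->
  cross_pairs (p ^ n.+1) + (p ^ n) ^ 3 * p ^ n.+1 =
  (p ^ n.+1) ^ 4 + p ^ 3 * cross_pairs (p ^ n).
Proof.
move=> p_pr; have p_gt0 := prime_gt0 p_pr.
pose dvd3 e b c := (p %| e) * ((p %| b) * ((p %| c) * 1)).
have step : sum3 (p ^ n.+1)
      (fun e b c => cross_ker (p ^ n.+1) e b c + p ^ n.+1 * dvd3 e b c) =
    sum3 (p ^ n.+1) (fun e b c => p ^ n.+1 + p ^ 3 * ((p %| e) * ((p %| b) *
      ((p %| c) * cross_ker (p ^ n) (e %/ p) (b %/ p) (c %/ p))))).
  apply: eq_sum3 => e b c _ _ _; rewrite cross_ker_rec // /dvd3.
  by case: (p %| e); case: (p %| b); case: (p %| c);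
    rewrite /= ?mul1n ?mul0n ?muln0 ?muln1 ?addn0 // addnC.
move: step; rewrite !sum3D !sum3Ml !sum3_const [in sum3 _ dvd3]expnSr sum3_dvdn //.
rewrite [in X in _ = _ + p ^ 3 * X]expnSr sum3_dvdn // sum3_const muln1.
under [X in _ = _ + _ * X]eq_sum3 => e b c _ _ _ do rewrite !mulnK //.
by rewrite [_ * (p ^ n) ^ 3]mulnC -expnSr.
Qed.

Lemma cross_pairs_closed_form p n : prime p ->
  p ^ 2 * cross_pairs (p ^ n) + (p + 1) * p ^ (3 * n) = (p ^ 2 + p + 1) * p ^ (4 * n).
Proof.
move=> p_pr; elim: n => [|n IHn].
  by rewrite /cross_pairs /cross_ker /sum3 !big_ord1 /cross_mod0 !modn1; lia.
rewrite [3 * _]mulnC [4 * _]mulnC !expnM in IHn.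
rewrite [3 * _]mulnC [4 * _]mulnC !expnM.
move: (cross_pairs_rec n p_pr); rewrite expnS.
move: (p ^ n) (cross_pairs _) (cross_pairs _) IHn => X G' G IHn rec.
apply: (@addIn (p ^ 3 * X ^ 4 + p ^ 5 * G)).
transitivity (p ^ 2 * (G' + X ^ 3 * (p * X)) + p ^ 3 * (p ^ 2 * G + (p + 1) * X ^ 3)).
  ring.
rewrite rec IHn; ring.
Qed.

Section Matrices.
Local Open Scope ring_scope.

Definition mx2 (T : Type) (a b c d : T) : 'M[T]_2 :=
  \matrix_(i, j) if i == 0 :> nat then (if j == 0 :> nat then a else b)
                 else (if j == 0 :> nat then c else d).

Lemma mx2_eq0 (T : nmodType) (a b c d : T) :
  (mx2 a b c d == 0) = [&& a == 0, b == 0, c == 0 & d == 0].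
Proof.
apply/eqP/and4P => [/matrixP A0 | [/eqP-> /eqP-> /eqP-> /eqP->]].
  by move: (A0 ord0 ord0) (A0 ord0 ord_max) (A0 ord_max ord0) (A0 ord_max ord_max);
    rewrite !mxE /= => -> -> -> ->.
by apply/matrixP => i j; rewrite !mxE; case: ifP; case: ifP.
Qed.

Lemma mx2_commuteE (T : comPzRingType) (e b c d u y z w : T) :
  (mx2 (e + d) b c d *m mx2 (u + w) y z w == mx2 (u + w) y z w *m mx2 (e + d) b c d)
  = [&& b * z == c * y, c * u == e * z & e * y == b * u].
Proof.
rewrite -subr_eq0.
have -> : mx2 (e + d) b c d *m mx2 (u + w) y z w - mx2 (u + w) y z w *m mx2 (e + d) b c d
    = mx2 (b * z - c * y) (e * y - b * u) (c * u - e * z) (c * y - b * z).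
  apply/matrixP => i j; rewrite !mxE !big_ord_recr !big_ord0 /= !mxE.
  by case: i => [[|[|i]]] //= _; case: j => [[|[|j]]] //= _; ring.
rewrite mx2_eq0 !subr_eq0 [c * y == _]eq_sym.
by case: (b * z == c * y); case: (c * u == e * z); case: (e * y == b * u).
Qed.

Lemma sum_mx2 (T : finZmodType) (F : 'M[T]_2 -> nat) :
  \sum_(A : 'M[T]_2) F A =
  \sum_(e : T) \sum_(b : T) \sum_(c : T) \sum_(d : T) F (mx2 (e + d) b c d).
Proof.
pose of_entries (x : T * T * T * T) := mx2 (x.1.1.1 + x.2) x.1.1.2 x.1.2 x.2.
pose to_entries (A : 'M[T]_2) :=
  (A ord0 ord0 - A ord_max ord_max, A ord0 ord_max, A ord_max ord0, A ord_max ord_max).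
rewrite (reindex of_entries); last first.
  exists to_entries => [[[[e b] c] d] _ | A _]; first by rewrite /to_entries !mxE /= addrK.
  apply/matrixP => i j; rewrite !mxE /= subrK.
  by case: i => [[|[|i]]] //= ?; case: j => [[|[|j]]] //= ?; congr (A _ _); apply: val_inj.
rewrite -(pair_bigA _ (fun x d => F (of_entries (x, d)))).
rewrite -(pair_bigA _ (fun x c => \sum_d F (of_entries (x, c, d)))).
by rewrite -(pair_bigA _ (fun e b => \sum_c \sum_d F (of_entries (e, b, c, d)))).
Qed.

Lemma card_comm_mx2 (T : finComPzRingType) :
  #|[set AB : 'M[T]_2 * 'M[T]_2 | AB.1 *m AB.2 == AB.2 *m AB.1]| =
  (#|T| ^ 2 * \sum_(e : T) \sum_(b : T) \sum_(c : T) \sum_(u : T) \sum_(y : T) \sum_(z : T)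
     [&& b * z == c * y, c * u == e * z & e * y == b * u]%R)%N.
Proof.
rewrite -sum1_card big_mkcond /=.
under eq_bigr => AB _ do rewrite inE.
rewrite -(pair_bigA _ (fun A B => if A *m B == B *m A then 1 else 0)%N).
rewrite sum_mx2 big_distrr /=.
apply: eq_bigr => e _; rewrite big_distrr /=; apply: eq_bigr => b _.
rewrite big_distrr /=; apply: eq_bigr => c _.
have sum_centralizer (d : T) : (\sum_(B : 'M[T]_2)
    (if (mx2 (e + d) b c d *m B == B *m mx2 (e + d) b c d)%R then 1 else 0) =
    #|T| * \sum_(u : T) \sum_(y : T) \sum_(z : T)
      [&& b * z == c * y, c * u == e * z & e * y == b * u]%R)%N.
  rewrite sum_mx2 big_distrr /=; apply: eq_bigr => u _.
  rewrite big_distrr /=; apply: eq_bigr => y _.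
  rewrite big_distrr /=; apply: eq_bigr => z _.
  by rewrite -sum_nat_const; apply: eq_bigr => w _; rewrite mx2_commuteE; case: ifP.
by rewrite (eq_bigr _ (fun d _ => sum_centralizer d)) sum_nat_const mulnA expnS expn1.
Qed.

End Matrices.

Lemma card_comm_mx2_Zp M : 1 < M ->
  #|[set AB : 'M['Z_M]_2 * 'M['Z_M]_2 | (AB.1 *m AB.2 == AB.2 *m AB.1)%R]| =
  M ^ 2 * cross_pairs M.
Proof.
(* In 'Z_k.+2, [x * y == x' * y'] unfolds to [x * y == x' * y' %[mod k.+2]]. *)
by case: M => [|[|k]] // _; rewrite card_comm_mx2 card_ord.
Qed.

Lemma C2_closed_form p n : prime p -> 0 < n ->
  p ^ 2 * C2 p n + (p + 1) * p ^ (5 * n) = (p ^ 2 + p + 1) * p ^ (6 * n).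
Proof.
move=> p_pr n_gt0; have pn_gt1 : 1 < p ^ n by rewrite (ltn_exp2l 0) ?prime_gt1.
rewrite /C2 card_comm_mx2_Zp // [5 * n]mulnC [6 * n]mulnC !expnM.
have := cross_pairs_closed_form n p_pr; rewrite [3 * n]mulnC [4 * n]mulnC !expnM.
move: (p ^ n) (cross_pairs _) => X G closedG.
transitivity (X ^ 2 * (p ^ 2 * G + (p + 1) * X ^ 3)); first ring.
by rewrite closedG; ring.
Qed.

Local Open Scope ring_scope.
Local Open Scope classical_set_scope.

Section Ratio.
Variable R : realType.

Lemma sigma_pE p : (1 < p)%N -> sigma_p R p = 1 + p%:R^-1 + p%:R^-1 ^+ 2.
Proof.
move=> p_gt1; have p_ge2 : 2 <= p%:R :> R by rewrite (ler_nat R 2 p).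
have p_neq0 : p%:R != 0 :> R by rewrite gt_eqF // (lt_le_trans _ p_ge2).
have p2_neq1 : p%:R ^+ 2 - 1 != 0 :> R by rewrite subr_eq0 gt_eqF //; nra.
by rewrite /sigma_p; field; rewrite p_neq0 p2_neq1.
Qed.

Lemma C2_ratioE p n : prime p -> (0 < n)%N ->
  C2_ratio R p n = sigma_p R p - (p%:R^-1 + p%:R^-1 ^+ 2) * p%:R^-1 ^+ n.
Proof.
move=> p_pr n_gt0; have p_gt0 : 0 < p%:R :> R by rewrite ltr0n prime_gt0.
have := congr1 (fun m => m%:R : R) (C2_closed_form p_pr n_gt0).
rewrite /= !(natrD, natrM, natrX) [(5 * n)%N]mulnC [(6 * n)%N]mulnC !exprM.
rewrite /C2_ratio sigma_pE ?prime_gt1 // [(6 * n)%N]mulnC exprM [p%:R^-1 ^+ n]exprVn.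
move: (C2 p n)%:R (p%:R ^+ n) (expf_neq0 n (lt0r_neq0 p_gt0)) => C X X_neq0 closedC.
have -> : C = ((p%:R ^+ 2 + p%:R + 1) * X ^+ 6 - (p%:R + 1) * X ^+ 5) / p%:R ^+ 2.
  by rewrite -closedC; field; rewrite lt0r_neq0.
by field; rewrite X_neq0 lt0r_neq0.
Qed.

Lemma C2_ratio_main_term_le p n : prime p -> (0 < n)%N ->
  `|C2_ratio R p n - main_term R p n| <= 2 * p%:R^-1 ^+ n.
Proof.
move=> p_pr n_gt0; have p_ge2 : 2 <= p%:R :> R by rewrite (ler_nat R 2 p) prime_gt1.
rewrite C2_ratioE // /main_term sigma_pE ?prime_gt1 // -exprVn; set t := p%:R^-1.
have t_gt0 : 0 < t by rewrite invr_gt0 (lt_le_trans _ p_ge2).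
have t_le_half : t <= 2^-1 by rewrite lef_pV2 ?posrE // (lt_le_trans _ p_ge2).
have tn_ge0 : 0 <= t ^+ n by rewrite exprn_ge0 ?ltW.
have tu_ge0 : 0 <= t ^+ (2 * uphalf n) by rewrite exprn_ge0 ?ltW.
have tu_le_tn : t ^+ (2 * uphalf n) <= t ^+ n.
  by apply: ler_wiXn2l; [exact: ltW | lra | rewrite mul2n -leq_uphalf_double].
have s_ge1 : 1 <= 1 + t + t ^+ 2 by nra.
have s_le2 : 1 + t + t ^+ 2 <= 2 by nra.
have k_ge0 : 0 <= t + t ^+ 2 by nra.
have k_le1 : t + t ^+ 2 <= 1 by nra.
move: tn_ge0 tu_ge0 tu_le_tn s_ge1 s_le2 k_ge0 k_le1.
move: (t ^+ n) (t ^+ (2 * uphalf n)) (1 + t + t ^+ 2) (t + t ^+ 2) => v u s k.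
move=> v_ge0 u_ge0 u_le_v s_ge1 s_le2 k_ge0 k_le1.
by rewrite ler_norml; apply/andP; split; nra.
Qed.

Lemma exprVn_le_sqrt (x : R) n : 1 <= x -> x^-1 ^+ n <= (Num.sqrt x)^-1 ^+ n.
Proof.
move=> x_ge1; have x_gt0 : 0 < x by apply: lt_le_trans x_ge1.
rewrite -(sqrtrV (ltW x_gt0)); set y := x^-1.
have y_ge0 : 0 <= y by rewrite invr_ge0 ltW.
have y_le1 : y <= 1 by rewrite invf_le1.
have sqrt_le1 : Num.sqrt y <= 1 by rewrite -sqrtr1 ler_wsqrtr.
apply: lerXn2r; rewrite ?nnegrE ?sqrtr_ge0 //.
by rewrite -{1}(sqr_sqrtr y_ge0); have := sqrtr_ge0 y; nra.
Qed.

Lemma cvg_C2_ratio p : prime p -> (fun n => C2_ratio R p n) @ \oo --> sigma_p R p.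
Proof.
move=> p_pr; have p_gt1 : 1 < p%:R :> R by rewrite ltr1n prime_gt1.
have t_lt1 : `|p%:R^-1| < 1 :> R by rewrite gtr0_norm ?invf_lt1 ?invr_gt0 ?(lt_trans ltr01).
have : (fun n => sigma_p R p - (p%:R^-1 + p%:R^-1 ^+ 2) * p%:R^-1 ^+ n) @ \oo -->
    sigma_p R p - (p%:R^-1 + p%:R^-1 ^+ 2) * 0.
  exact: cvgB (cvg_cst _) (cvgM (cvg_cst _) (cvg_expr t_lt1)).
rewrite mulr0 subr0 => lim; apply: cvg_trans lim; apply: near_eq_cvg.
by exists 1%N => // n /= n_gt0; rewrite C2_ratioE.
Qed.

End Ratio.

Theorem theorem1p3 (R : realType) :
  (exists C : R, forall p n : nat, prime p -> (0 < n)%N ->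
     `| C2_ratio R p n - main_term R p n |
       <= C * (n%:R ^+ 2) * (Num.sqrt (p%:R))^-n)
  /\ (forall p : nat, prime p ->
        (fun n : nat => C2_ratio R p n) @ \oo --> sigma_p R p).
Proof.
split; last exact: cvg_C2_ratio.
exists 2 => p n p_pr n_gt0.
have p_ge1 : 1 <= p%:R :> R by rewrite ler1n prime_gt0.
apply: le_trans (C2_ratio_main_term_le R p_pr n_gt0) _.
rewrite -mulrA ler_wpM2l // -exprVn.
apply: le_trans (exprVn_le_sqrt n p_ge1) _.
by rewrite ler_peMl ?exprn_ge0 ?invr_ge0 ?sqrtr_ge0 // -natrX ler1n expn_gt0 n_gt0.
Qed.
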